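(* Let $G$ be a pro-oligomorphic group. The following are equivalent: (a) $G$ is split; (b) for every pro-oligomorphic group $H$, every open subgroup of $G\times H$ has the form $U\times V$ with $U$ open in $G$ and $V$ open in $H$; (c) every open subgroup of $G$ is its own normalizer; (d) the automorphism group of every transitive $G$-set is trivial; (e) whenever $V\subset U$ are open subgroups with $V$ of finite index in $U$, we have $U=V$. Moreover, if $G$ is split then every open subgroup of $G$ is split.
   Context: A pro-oligomorphic group is a Hausdorff topological group in which open subgroups form a neighborhood basis of the identity and $U\backslash G/V$ is finite for all open subgroups $U,V$. A $G$-set means a set with an action of $G$ having open stabilizers and finitely many orbits. $G$ is split if for every pro-oligomorphic group $H$, every transitive $(G\times H)$-set is isomorphic to $X\times Y$ for some transitive $G$-set $X$ and transitive $H$-set $Y$. *)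

From HB Require Import structures.
From mathcomp Require Import all_boot all_order all_algebra.
From mathcomp Require Import all_classical all_reals all_analysis.

Set Implicit Arguments. Unset Strict Implicit. Unset Printing Implicit Defensive.
Local Open Scope classical_set_scope.

Record tgroup := TGroup {
  tg_car :> topologicalType;
  tg_mul : tg_car -> tg_car -> tg_car;
  tg_inv : tg_car -> tg_car;
  tg_one : tg_car }.

Section Defs.
Variable G : tgroup.
Local Notation mul := (@tg_mul G).
Local Notation inv := (@tg_inv G).
Local Notation one := (tg_one G).

Definition is_topgroup : Prop :=
  [/\ (forall x y z : G, mul x (mul y z) = mul (mul x y) z),
      (forall x : G, mul one x = x),
      (forall x : G, mul (inv x) x = one),
      continuous (fun p : G * G => mul p.1 p.2) &
      continuous inv].

Definition is_subgroup (U : set G) : Prop :=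
  [/\ U one,
      (forall x y, U x -> U y -> U (mul x y)) &
      (forall x, U x -> U (inv x))].

Definition open_subgroup (U : set G) : Prop := is_subgroup U /\ open U.

Definition dcoset (U : set G) (g : G) (V : set G) : set G :=
  [set z | exists u v, [/\ U u, V v & z = mul (mul u g) v]].

Definition lcoset (u : G) (V : set G) : set G := (mul u) @` V.

Definition pro_oligomorphic : Prop :=
  [/\ is_topgroup,
      hausdorff_space G,
      (forall N : set G, nbhs one N -> exists U, open_subgroup U /\ U `<=` N) &
      (forall U V : set G, open_subgroup U -> open_subgroup V ->
         finite_set (range (fun g => dcoset U g V)))].

Definition stabilizer (X : Type) (act : G -> X -> X) (x : X) : set G :=
  [set g | act g x = x].

Definition orbit (X : Type) (act : G -> X -> X) (x : X) : set X :=
  [set act g x | g in setT].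

Definition is_Gset (X : Type) (act : G -> X -> X) : Prop :=
  [/\ (forall x, act one x = x),
      (forall g h x, act (mul g h) x = act g (act h x)),
      (forall x, open (stabilizer act x)) &
      finite_set (range (orbit act))].

Definition transitive_Gset (X : Type) (act : G -> X -> X) : Prop :=
  [/\ is_Gset act, (exists x : X, True) & (forall x y : X, exists g, act g x = y)].

Definition equivariant (X Y : Type) (actX : G -> X -> X) (actY : G -> Y -> Y)
  (f : X -> Y) : Prop := forall g x, f (actX g x) = actY g (f x).

Definition Gset_iso (X Y : Type) (actX : G -> X -> X) (actY : G -> Y -> Y) : Prop :=
  exists f : X -> Y, bijective f /\ equivariant actX actY f.

Definition normalizer (U : set G) : set G :=
  [set g | [set mul (mul g u) (inv g) | u in U] = U].

End Defs.

Definition prod_tgroup (G H : tgroup) : tgroup :=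
  @TGroup (G * H)%type
    (fun p q => (@tg_mul G p.1 q.1, @tg_mul H p.2 q.2))
    (fun p => (@tg_inv G p.1, @tg_inv H p.2))
    (tg_one G, tg_one H).

Definition prod_act (G H : tgroup) (X Y : Type)
  (actX : G -> X -> X) (actY : H -> Y -> Y) :
  prod_tgroup G H -> (X * Y)%type -> (X * Y)%type :=
  fun gh xy => (actX gh.1 xy.1, actY gh.2 xy.2).

Definition split_group (G : tgroup) : Prop :=
  forall H : tgroup, pro_oligomorphic H ->
  forall (Z : Type) (actZ : prod_tgroup G H -> Z -> Z),
    transitive_Gset actZ ->
    exists (X : Type) (actX : G -> X -> X) (Y : Type) (actY : H -> Y -> Y),
      [/\ transitive_Gset actX, transitive_Gset actY &
          Gset_iso actZ (prod_act actX actY)].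

(* An open subgroup U of G as a topological group: carrier the subtype
   [set_type U] with the subspace (initial) topology, and restricted ops. *)
Section SubGroup.
Variables (G : tgroup) (U : set G) (hU : is_subgroup U).

Let mulU (x y : set_type U) : set_type U :=
  exist _ (@tg_mul G (set_val x) (set_val y))
    (mem_set (let: And3 _ hm _ := hU in
              hm _ _ (set_valP x) (set_valP y))).

Let invU (x : set_type U) : set_type U :=
  exist _ (@tg_inv G (set_val x))
    (mem_set (let: And3 _ _ hi := hU in hi _ (set_valP x))).

Let oneU : set_type U :=
  exist _ (tg_one G) (mem_set (let: And3 h1 _ _ := hU in h1)).

Definition sub_tgroup : tgroup := @TGroup (set_type U) mulU invU oneU.
End SubGroup.

From mathcomp Require Import all_boot all_order all_algebra.
From mathcomp Require Import all_classical all_reals all_analysis.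
Local Open Scope classical_set_scope.
Set Implicit Arguments. Unset Strict Implicit. Unset Printing Implicit Defensive.

(* Everything reduces to (c): open subgroups are self-normalizing.  For an
   open subgroup W of G x H, the kernels U = {a | (a,1) in W} and
   V = {b | (1,b) in W} are open and normalized by the projections of W, so
   under (c) W = U x V; and a transitive (G x H)-set whose point stabilizer
   is U x V is the product of the G-orbit and the H-orbit of that point.
   Conversely, if g normalizes U but g is not in U, the preimage of the
   diagonal of N(U)/U is an open subgroup of G x G that is not a product,
   and right multiplication by g is a nontrivial automorphism of G/U.  For
   (e), the core of a finite-index open subgroup V of U is open and
   normalized by U, so (c) forces it to contain U; conversely N(U)/U is
   finite because it injects into the double cosets U\G/U.  Open subgroups
   inherit (c), hence are split. *)

Definition group_laws (K : tgroup) : Prop :=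
  [/\ (forall x y z : K, tg_mul x (tg_mul y z) = tg_mul (tg_mul x y) z),
      (forall x : K, tg_mul (tg_one K) x = x) &
      (forall x : K, tg_mul (tg_inv x) x = tg_one K)].

(* Weaker than [is_topgroup], but plainly inherited by products. *)
Definition translations_continuous (K : tgroup) : Prop :=
  forall a b : K, continuous (fun x => tg_mul (tg_mul a x) b).

Lemma topgroup_group_laws (K : tgroup) : is_topgroup K -> group_laws K.
Proof. by case. Qed.

Lemma topgroup_translations_continuous (K : tgroup) :
  is_topgroup K -> translations_continuous K.
Proof.
case=> _ _ _ cmul _ a b x.
apply: continuous2_cvg; [exact: (cmul (_, _))| |exact: cvg_cst].
by apply: continuous2_cvg; [exact: (cmul (_, _))|exact: cvg_cst|exact: cvg_id].
Qed.

Lemma sval_inj (T : Type) (P : T -> Prop) : injective (@sval T P).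
Proof. by move=> u v; apply: eq_sig_hprop => x p q; exact: Prop_irrelevance. Qed.

Section GroupLaws.
Variables (K : tgroup) (hK : group_laws K).
Local Notation mul := (@tg_mul K).
Local Notation inv := (@tg_inv K).
Local Notation one := (tg_one K).

Lemma tg_mulA (x y z : K) : mul x (mul y z) = mul (mul x y) z.
Proof. by case: hK. Qed.
Lemma tg_mul1g (x : K) : mul one x = x.
Proof. by case: hK. Qed.
Lemma tg_mulVg (x : K) : mul (inv x) x = one.
Proof. by case: hK. Qed.
Lemma tg_mulKg (x y : K) : mul (inv x) (mul x y) = y.
Proof. by rewrite tg_mulA tg_mulVg tg_mul1g. Qed.
Lemma tg_mulgV (x : K) : mul x (inv x) = one.
Proof.
have := tg_mulKg (inv x) (mul x (inv x)).
by rewrite (tg_mulKg x (inv x)) tg_mulVg => <-.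
Qed.
Lemma tg_mulg1 (x : K) : mul x one = x.
Proof. by rewrite -(tg_mulVg x) tg_mulA tg_mulgV tg_mul1g. Qed.
Lemma tg_mulKVg (x y : K) : mul x (mul (inv x) y) = y.
Proof. by rewrite tg_mulA tg_mulgV tg_mul1g. Qed.
Lemma tg_mulgK (x y : K) : mul (mul x y) (inv y) = x.
Proof. by rewrite -tg_mulA tg_mulgV tg_mulg1. Qed.
Lemma tg_mulgKV (x y : K) : mul (mul x (inv y)) y = x.
Proof. by rewrite -tg_mulA tg_mulVg tg_mulg1. Qed.
Lemma tg_invg_eq (x y : K) : mul x y = one -> inv y = x.
Proof. by move=> xy1; rewrite -[LHS]tg_mul1g -xy1 tg_mulgK. Qed.
Lemma tg_invgK (x : K) : inv (inv x) = x.
Proof. by apply: tg_invg_eq; rewrite tg_mulgV. Qed.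
Lemma tg_invMg (x y : K) : inv (mul x y) = mul (inv y) (inv x).
Proof. by apply: tg_invg_eq; rewrite -tg_mulA tg_mulKg tg_mulVg. Qed.
Lemma tg_invg1 : inv one = one.
Proof. by apply: tg_invg_eq; rewrite tg_mul1g. Qed.
Lemma tg_mulgI (x : K) : injective (mul x).
Proof. by move=> y z /(congr1 (mul (inv x))); rewrite !tg_mulKg. Qed.
Lemma tg_mulIg (x : K) : injective (mul^~ x).
Proof. by move=> y z /(congr1 (mul^~ (inv x))); rewrite !tg_mulgK. Qed.
End GroupLaws.

Ltac tg_simpl hK := repeat progress rewrite ?(tg_invMg hK) ?(tg_invgK hK)
  ?(tg_invg1 hK) -?(tg_mulA hK) ?(tg_mulKg hK) ?(tg_mulKVg hK) ?(tg_mulVg hK)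
  ?(tg_mulgV hK) ?(tg_mul1g hK) ?(tg_mulg1 hK).

Section Subgroups.
Variables (K : tgroup) (hK : group_laws K).
Local Notation mul := (@tg_mul K).
Local Notation inv := (@tg_inv K).
Local Notation one := (tg_one K).

Lemma subgroup1 (U : set K) : is_subgroup U -> U one.
Proof. by case. Qed.
Lemma subgroupM (U : set K) x y : is_subgroup U -> U x -> U y -> U (mul x y).
Proof. by case=> _ + _; apply. Qed.
Lemma subgroupV (U : set K) x : is_subgroup U -> U x -> U (inv x).
Proof. by case=> _ _; apply. Qed.
Lemma subgroupVE (U : set K) x : is_subgroup U -> U (inv x) = U x.
Proof.
move=> hU; apply/propext; split; last exact: subgroupV.
by move/(subgroupV hU); rewrite tg_invgK.
Qed.

Lemma subgroup_conj (U : set K) a x : is_subgroup U -> U a -> U x ->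
  U (mul (mul a x) (inv a)).
Proof. by move=> hU Ua Ux; do !apply: subgroupM => //; exact: subgroupV. Qed.

Lemma normalizerP (U : set K) g : normalizer U g <->
  (forall x, U (mul (mul g x) (inv g)) <-> U x).
Proof.
split=> [nUg x|conjU].
  split=> [|Ux]; last by rewrite -nUg; exists x.
  by rewrite -{1}nUg => -[u Uu /(tg_mulIg hK) /(tg_mulgI hK) <-].
apply/seteqP; split=> [_ [u Uu <-]|x Ux]; first exact/conjU.
by exists (mul (mul (inv g) x) g); [apply/conjU|]; tg_simpl hK.
Qed.
Lemma sub_normalizer (U : set K) : is_subgroup U -> U `<=` normalizer U.
Proof.
move=> hU g Ug; apply/normalizerP => x; split=> [Ugx|]; last exact: subgroup_conj.
have := subgroupM hU (subgroupM hU (subgroupV hU Ug) Ugx) Ug.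
by tg_simpl hK.
Qed.

Lemma normalizer_subgroup (U : set K) : is_subgroup (normalizer U).
Proof.
split.
- by apply/normalizerP => x; rewrite tg_invg1 // tg_mul1g // tg_mulg1.
- move=> a b /normalizerP nUa /normalizerP nUb; apply/normalizerP => x.
  have -> : mul (mul (mul a b) x) (inv (mul a b)) =
      mul (mul a (mul (mul b x) (inv b))) (inv a) by tg_simpl hK.
  by rewrite nUa nUb.
- move=> a /normalizerP nUa; apply/normalizerP => x.
  by rewrite -nUa; tg_simpl hK.
Qed.

Lemma normalizer_conjg (U : set K) g x : normalizer U g -> U x ->
  U (mul (mul g x) (inv g)).
Proof. by move=> /normalizerP nUg /(nUg x). Qed.

Lemma normalizer_conjgV (U : set K) g x : normalizer U g -> U x ->
  U (mul (mul (inv g) x) g).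
Proof.
move=> /(subgroupV (normalizer_subgroup U)) nUg /(normalizer_conjg nUg).
by rewrite tg_invgK.
Qed.
End Subgroups.

Section Cosets.
Variables (K : tgroup) (hK : group_laws K).
Local Notation mul := (@tg_mul K).
Local Notation inv := (@tg_inv K).
Local Notation one := (tg_one K).

Lemma lcosetM (S : set K) g p : lcoset g (lcoset p S) = lcoset (mul g p) S.
Proof.
apply/seteqP; split=> x.
  by case=> _ [s Ss <-] <-; exists s => //; rewrite tg_mulA.
by case=> s Ss <-; exists (mul p s); [exists s|rewrite tg_mulA].
Qed.

Lemma dcoset_normalizer (U : set K) g : is_subgroup U -> normalizer U g ->
  dcoset U g U = lcoset g U.
Proof.
move=> hU Ng; apply/seteqP; split=> [_ [u [v [Uu Uv ->]]]|_ [v Uv <-]].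
  exists (mul (mul (mul (inv g) u) g) v); last by tg_simpl hK.
  by apply: subgroupM => //; exact: normalizer_conjgV.
by exists one, v; split=> //; [exact: subgroup1|rewrite tg_mul1g].
Qed.

Definition rcoset (S : set K) g : set K := (mul^~ g) @` S.

Lemma rcosetM (S : set K) a b : rcoset (rcoset S a) b = rcoset S (mul a b).
Proof.
apply/seteqP; split=> x.
  by case=> _ [s Ss <-] <-; exists s => //; rewrite tg_mulA.
by case=> s Ss <-; exists (mul s a); [exists s|rewrite tg_mulA].
Qed.

Lemma rcoset1 (S : set K) : rcoset S one = S.
Proof.
apply/seteqP; split=> [_ [s Ss <-]|s Ss]; first by rewrite tg_mulg1.
by exists s => //; rewrite tg_mulg1.
Qed.

Lemma lcoset_rcoset (S : set K) a g :
  lcoset a (rcoset S g) = rcoset (lcoset a S) g.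
Proof.
apply/seteqP; split=> x.
  by case=> _ [s Ss <-] <-; exists (mul a s); [exists s|rewrite tg_mulA].
by case=> _ [s Ss <-] <-; exists (mul s g); [exists s|rewrite tg_mulA].
Qed.

Lemma rcoset_normalizer (U : set K) g : normalizer U g -> rcoset U g = lcoset g U.
Proof.
move=> Ng; apply/seteqP; split=> _ [u Uu <-].
  by exists (mul (mul (inv g) u) g); [exact: normalizer_conjgV|tg_simpl hK].
by exists (mul (mul g u) (inv g)); [exact: normalizer_conjg|tg_simpl hK].
Qed.
End Cosets.

Section TopologicalSubgroups.
Variables (K : tgroup) (hK : group_laws K) (hconj : translations_continuous K).
Local Notation mul := (@tg_mul K).
Local Notation inv := (@tg_inv K).
Local Notation one := (tg_one K).

Lemma nbhs_lcoset (a : K) (N : set K) : nbhs one N ->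
  nbhs a [set x | N (mul (inv a) x)].
Proof.
move=> N1; have : nbhs a ((fun x => mul (mul (inv a) x) one) @^-1` N).
  by apply: hconj; rewrite tg_mulVg // tg_mulg1.
by apply: filterS => x /=; rewrite tg_mulg1.
Qed.

Lemma nbhs1_conjg (a : K) (N : set K) : nbhs one N ->
  nbhs one [set x | N (mul (mul (inv a) x) a)].
Proof. by move=> N1; apply: hconj; rewrite tg_mulg1 // tg_mulVg. Qed.

Lemma open_subgroup_nbhs1 (U : set K) : open_subgroup U -> nbhs one U.
Proof. by case=> hU oU; apply: open_nbhs_nbhs; split=> //; exact: subgroup1. Qed.

Lemma nbhs1_subgroup_open (S : set K) : is_subgroup S -> nbhs one S -> open S.
Proof.
move=> hS S1; rewrite openE => a Sa.
apply: filterS _ (nbhs_lcoset a S1) => x /= /(subgroupM hS Sa).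
by rewrite tg_mulKVg.
Qed.
End TopologicalSubgroups.

Lemma transitive_Gset_intro (K : tgroup) (X : Type) (act : K -> X -> X) (x0 : X) :
  (forall x, act (tg_one K) x = x) ->
  (forall g h x, act (tg_mul g h) x = act g (act h x)) ->
  (forall x, open (stabilizer act x)) ->
  (forall x y, exists g, act g x = y) -> transitive_Gset act.
Proof.
move=> act1 actM open_stab trans.
split; [split=> //|by exists x0|exact: trans].
apply: (sub_finite_set _ (finite_set1 setT)) => _ [x _ <-].
by apply/seteqP; split=> // y _; have [g <-] := trans x y; exists g.
Qed.

Section Actions.
Variables (K : tgroup) (hK : group_laws K) (X : Type) (act : K -> X -> X).
Hypotheses (act1 : forall x, act (tg_one K) x = x)
  (actM : forall g h x, act (tg_mul g h) x = act g (act h x)).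

Lemma actK g x : act (tg_inv g) (act g x) = x.
Proof. by rewrite -actM tg_mulVg. Qed.

Lemma act_eq_stabilizer g h x :
  act g x = act h x <-> stabilizer act x (tg_mul (tg_inv g) h).
Proof.
rewrite /stabilizer /=; split=> [gh|ghx]; last by rewrite -{1}ghx -actM tg_mulKVg.
by rewrite actM -gh -actM tg_mulVg.
Qed.

Lemma stabilizer_subgroup x : is_subgroup (stabilizer act x).
Proof.
rewrite /stabilizer; split=> /= [|g h gx hx|g gx]; first exact: act1.
  by rewrite actM hx.
by rewrite -{1}gx -actM tg_mulVg.
Qed.

Lemma stabilizer_act g x : stabilizer act (act g x) =
  [set tg_mul (tg_mul g y) (tg_inv g) | y in stabilizer act x].
Proof.
rewrite /stabilizer; apply/seteqP; split=> [h hgx|_ [y yx <-]] /=.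
  exists (tg_mul (tg_mul (tg_inv g) h) g); last by tg_simpl hK.
  by rewrite /= !actM hgx actK.
by rewrite !actM actK yx.
Qed.
End Actions.

Lemma pair_continuousl (T U : topologicalType) (c : U) :
  continuous (fun t : T => (t, c)).
Proof. by move=> t; apply: cvg_pair; [exact: cvg_id|exact: cvg_cst]. Qed.

Lemma pair_continuousr (T U : topologicalType) (c : T) :
  continuous (fun u : U => (c, u)).
Proof.
by move=> u; apply: (cvg_pair (f := fun=> c)); [exact: cvg_cst|exact: cvg_id].
Qed.

Lemma prod_group_laws (G H : tgroup) :
  group_laws G -> group_laws H -> group_laws (prod_tgroup G H).
Proof.
move=> hG hH; split=> [[x1 x2] [y1 y2] [z1 z2]|[x1 x2]|[x1 x2]] /=.
- by rewrite !tg_mulA.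
- by rewrite !tg_mul1g.
- by rewrite !tg_mulVg.
Qed.

Lemma prod_translations_continuous (G H : tgroup) :
  translations_continuous G -> translations_continuous H ->
  translations_continuous (prod_tgroup G H).
Proof.
move=> cG cH a b [x y] A [[P Q] /= [nP nQ] sPQ].
exists ((fun x => tg_mul (tg_mul a.1 x) b.1) @^-1` P,
        (fun y => tg_mul (tg_mul a.2 y) b.2) @^-1` Q).
  by split; [exact: cG nP|exact: cH nQ].
by move=> [u v] [/= Pu Qv]; apply: sPQ.
Qed.

Section CosetSpace.
Variables (K : tgroup) (hK : group_laws K) (W : set K) (hW : is_subgroup W).
Local Notation mul := (@tg_mul K).
Local Notation inv := (@tg_inv K).
Local Notation one := (tg_one K).

Lemma lcoset_id w : W w -> lcoset w W = W.
Proof.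
move=> Ww; apply/seteqP; split=> [_ [v Wv <-]|x Wx]; first exact: subgroupM.
exists (mul (inv w) x); last by rewrite tg_mulKVg.
by apply: subgroupM => //; exact: subgroupV.
Qed.

Lemma lcoset_eqP p q : lcoset p W = lcoset q W <-> W (mul (inv p) q).
Proof.
split=> [pWqW|Wpq].
  2: by rewrite -(tg_mulKVg hK p q) -(lcosetM hK) (lcoset_id Wpq).
have : lcoset (mul (inv p) q) W = W.
  rewrite -(lcosetM hK) -pWqW (lcosetM hK) tg_mulVg // lcoset_id //.
  exact: subgroup1.
by move=> <-; exists one; [exact: subgroup1|rewrite tg_mulg1].
Qed.

Definition coset_space := {S : set K | exists p, S = lcoset p W}.

Definition coset_of p : coset_space := exist _ (lcoset p W) (ex_intro _ p erefl).

Lemma coset_ofP (S : coset_space) : exists p, S = coset_of p.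
Proof. by case: S => S [p eS]; exists p; apply: sval_inj. Qed.

Lemma coset_act_subproof g (S : coset_space) :
  exists p, lcoset g (sval S) = lcoset p W.
Proof. by case: S => S [p /= ->]; exists (mul g p); exact: (lcosetM hK). Qed.

Definition coset_act g (S : coset_space) : coset_space :=
  exist _ (lcoset g (sval S)) (coset_act_subproof g S).

Lemma coset_actE g p : coset_act g (coset_of p) = coset_of (mul g p).
Proof. by apply: sval_inj; exact: (lcosetM hK). Qed.

Lemma stabilizer_coset_of p :
  stabilizer coset_act (coset_of p) = [set g | W (mul (mul (inv p) g) p)].
Proof.
rewrite /stabilizer; apply/seteqP; split=> g /=; rewrite coset_actE.
  by move=> /(congr1 sval) /lcoset_eqP /(subgroupV hW); tg_simpl hK.
move=> Wg; apply: sval_inj; apply/lcoset_eqP.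
by have := subgroupV hW Wg; tg_simpl hK.
Qed.

Lemma stabilizer_coset1 : stabilizer coset_act (coset_of one) = W.
Proof.
by rewrite stabilizer_coset_of; apply/seteqP; split=> g /=; tg_simpl hK.
Qed.

Lemma coset_space_transitive :
  translations_continuous K -> open W -> transitive_Gset coset_act.
Proof.
move=> hconj oW; apply: (transitive_Gset_intro (coset_of one)).
- by move=> S; have [p ->] := coset_ofP S; rewrite coset_actE tg_mul1g.
- by move=> g h S; have [p ->] := coset_ofP S; rewrite !coset_actE tg_mulA.
- move=> S; have [p ->] := coset_ofP S; rewrite stabilizer_coset_of.
  exact: (continuousP _).1 (hconj (inv p) p) _ oW.
- move=> S T; have [p ->] := coset_ofP S; have [q ->] := coset_ofP T.
  by exists (mul q (inv p)); rewrite coset_actE tg_mulgKV.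
Qed.
End CosetSpace.

Section MorphOrbit.
Variables (K L : tgroup) (hK : group_laws K) (Z : Type) (actZ : L -> Z -> Z).
Hypothesis hZ : is_Gset actZ.
Variables (iota : K -> L) (z0 : Z).
Hypothesis iotaM : forall a b, iota (tg_mul a b) = tg_mul (iota a) (iota b).

Definition morph_orbit := {z : Z | exists g, z = actZ (iota g) z0}.

Definition morph_orbit_of g : morph_orbit :=
  exist _ (actZ (iota g) z0) (ex_intro _ g erefl).

Lemma morph_orbit_ofP (x : morph_orbit) : exists g, x = morph_orbit_of g.
Proof. by case: x => x [g ex]; exists g; apply: sval_inj. Qed.

Lemma morph_orbit_act_subproof g (x : morph_orbit) :
  exists h, actZ (iota g) (sval x) = actZ (iota h) z0.
Proof.
case: hZ x => _ actM _ _ [x [h /= ->]].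
by exists (tg_mul g h); rewrite iotaM actM.
Qed.

Definition morph_orbit_act g (x : morph_orbit) : morph_orbit :=
  exist _ (actZ (iota g) (sval x)) (morph_orbit_act_subproof g x).

Lemma morph_orbit_actE g h :
  morph_orbit_act g (morph_orbit_of h) = morph_orbit_of (tg_mul g h).
Proof. by case: hZ => _ actM _ _; apply: sval_inj; rewrite /= iotaM actM. Qed.

Lemma morph_orbit_transitive : continuous iota -> transitive_Gset morph_orbit_act.
Proof.
move=> iota_cont; have [act1 actM open_stab _] := hZ.
apply: (transitive_Gset_intro (morph_orbit_of (tg_one K))).
- move=> x; have [g ->] := morph_orbit_ofP x.
  by rewrite morph_orbit_actE tg_mul1g.
- move=> g h x; have [k ->] := morph_orbit_ofP x.
  by rewrite !morph_orbit_actE tg_mulA.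
- move=> x; have -> : stabilizer morph_orbit_act x =
      iota @^-1` stabilizer actZ (sval x).
    by apply/seteqP; split=> g /=; [move/(congr1 sval)|move=> ?; apply: sval_inj].
  exact: (continuousP _).1 iota_cont _ (open_stab _).
- move=> x y; have [g ->] := morph_orbit_ofP x; have [h ->] := morph_orbit_ofP y.
  by exists (tg_mul h (tg_inv g)); rewrite morph_orbit_actE tg_mulgKV.
Qed.
End MorphOrbit.

Lemma stabilizer_open_subgroup (K : tgroup) (X : Type) (act : K -> X -> X) x :
  group_laws K -> is_Gset act -> open_subgroup (stabilizer act x).
Proof.
move=> hK [act1 actM open_stab _].
by split; [exact: (stabilizer_subgroup hK act1 actM)|].
Qed.

Lemma equivariant_stabilizer (K : tgroup) (X Y : Type) (actX : K -> X -> X)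
    (actY : K -> Y -> Y) (f : X -> Y) :
  injective f -> equivariant actX actY f ->
  forall x, stabilizer actX x = stabilizer actY (f x).
Proof.
move=> f_inj f_eq x; rewrite /stabilizer.
by apply/seteqP; split=> g /= gx; [rewrite -f_eq gx|apply: f_inj; rewrite f_eq].
Qed.

Lemma stabilizer_prod_act (G H : tgroup) (X Y : Type) (actX : G -> X -> X)
    (actY : H -> Y -> Y) x y :
  stabilizer (prod_act actX actY) (x, y) =
  stabilizer actX x `*` stabilizer actY y.
Proof.
rewrite /stabilizer /prod_act; apply/seteqP.
by split=> -[a b] /=; [case=> -> ->|case=> /= -> ->].
Qed.

Section ProdGsetSplit.
Variables (G H : tgroup) (hG : group_laws G) (hH : group_laws H).
Variables (Z : Type) (actZ : prod_tgroup G H -> Z -> Z) (z0 : Z).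
Variables (U : set G) (V : set H).
Hypotheses (trZ : transitive_Gset actZ) (stabZ : stabilizer actZ z0 = U `*` V).
Hypotheses (U1 : U (tg_one G)) (V1 : V (tg_one H)).
Local Notation inG := (fun a : G => (a, tg_one H) : prod_tgroup G H).
Local Notation inH := (fun b : H => (tg_one G, b) : prod_tgroup G H).

Lemma act_z0_eqP (p q : prod_tgroup G H) :
  actZ p z0 = actZ q z0 <->
  actZ (inG p.1) z0 = actZ (inG q.1) z0 /\ actZ (inH p.2) z0 = actZ (inH q.2) z0.
Proof.
have [[act1 actM _ _] _ _] := trZ.
rewrite !(act_eq_stabilizer (prod_group_laws hG hH) act1 actM) stabZ /=.
rewrite !tg_invg1 // !tg_mul1g //.
by split=> [[Up Vq]|[[Up _] [_ Vq]]].
Qed.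

Lemma prod_Gset_split :
  exists (X : Type) (actX : G -> X -> X) (Y : Type) (actY : H -> Y -> Y),
    [/\ transitive_Gset actX, transitive_Gset actY &
        Gset_iso actZ (prod_act actX actY)].
Proof.
have [hZ _ reach] := trZ; have [_ actM _ _] := hZ.
have inGM a b : inG (tg_mul a b) = tg_mul (inG a) (inG b) by rewrite /= tg_mul1g.
have inHM a b : inH (tg_mul a b) = tg_mul (inH a) (inH b) by rewrite /= tg_mul1g.
pose actX := morph_orbit_act hZ (z0 := z0) inGM.
pose actY := morph_orbit_act hZ (z0 := z0) inHM.
exists (morph_orbit actZ inG z0), actX, (morph_orbit actZ inH z0), actY.
split.
- apply: (morph_orbit_transitive hG hZ z0 inGM); exact: pair_continuousl.
- apply: (morph_orbit_transitive hH hZ z0 inHM); exact: pair_continuousr.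
have pickP z : actZ (projT1 (cid (reach z0 z))) z0 = z by case: cid.
(* [f] maps [p z0] to [(p.1 z0, p.2 z0)]; [act_z0_eqP] makes it well defined
   and injective. *)
pose f z := (morph_orbit_of actZ inG z0 (projT1 (cid (reach z0 z))).1,
             morph_orbit_of actZ inH z0 (projT1 (cid (reach z0 z))).2).
have f_of p : f (actZ p z0) = (morph_orbit_of actZ inG z0 p.1,
                               morph_orbit_of actZ inH z0 p.2).
  have [eG eH] := (act_z0_eqP _ p).1 (pickP (actZ p z0)).
  by congr pair; apply: sval_inj.
exists f; split.
  rewrite -setTT_bijective; split=> // [z z' _ _|[x y] _].
    have [p <-] := reach z0 z; have [q <-] := reach z0 z'.
    by rewrite !f_of => -[eG eH]; apply/act_z0_eqP.
  have [a ->] := morph_orbit_ofP x; have [b ->] := morph_orbit_ofP y.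
  by exists (actZ (a, b) z0); rewrite ?f_of.
move=> p z; have [q <-] := reach z0 z.
by rewrite -actM !f_of /prod_act /actX /actY /= !morph_orbit_actE.
Qed.
End ProdGsetSplit.

Section CosetDiagonal.
Variables (K : tgroup) (hK : group_laws K) (U : set K) (hU : is_subgroup U).
Local Notation mul := (@tg_mul K).
Local Notation inv := (@tg_inv K).
Local Notation one := (tg_one K).

(* The preimage in [N(U) * N(U)] of the diagonal of [N(U)/U]. *)
Definition coset_diagonal : set (prod_tgroup K K) :=
  [set p | normalizer U p.1 /\ U (mul (inv p.1) p.2)].

Lemma coset_diagonal_subgroup : is_subgroup coset_diagonal.
Proof.
have hN := normalizer_subgroup hK U.
split=> [|[a b] [c d] [Na Uab] [Nc Ucd]|[a b] [Na Uab]] /=.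
- by split; [exact: subgroup1|rewrite tg_mulVg //; exact: subgroup1].
- split; first exact: subgroupM.
  have -> : mul (inv (mul a c)) (mul b d) =
      mul (mul (mul (inv c) (mul (inv a) b)) c) (mul (inv c) d).
    by tg_simpl hK.
  by apply: subgroupM => //; exact: normalizer_conjgV.
- split; first exact: subgroupV.
  have -> : mul (inv (inv a)) (inv b) =
      mul (mul a (inv (mul (inv a) b))) (inv a) by tg_simpl hK.
  by apply: normalizer_conjg => //; exact: subgroupV.
Qed.

Lemma open_coset_diagonal :
  translations_continuous K -> open U -> open coset_diagonal.
Proof.
move=> cK oU; have hKK := prod_group_laws hK hK.
apply: (nbhs1_subgroup_open hKK (prod_translations_continuous cK cK)).
  exact: coset_diagonal_subgroup.
exists (U, U) => /=; first by split; exact: open_subgroup_nbhs1.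
move=> [a b] [/= Ua Ub]; split; first exact: sub_normalizer.
by apply: subgroupM => //; exact: subgroupV.
Qed.

Lemma coset_diagonal_prod (A B : set K) :
  coset_diagonal = A `*` B -> normalizer U = U.
Proof.
move=> eW; apply/seteqP; split=> [g Ng|]; last exact: sub_normalizer.
have : coset_diagonal (g, g) by split; rewrite //= tg_mulVg //; exact: subgroup1.
have : coset_diagonal (one, one) := subgroup1 coset_diagonal_subgroup.
rewrite eW => -[_ B1] [Ag _].
have : coset_diagonal (g, one) by rewrite eW.
by case=> _ /=; rewrite tg_mulg1 // subgroupVE.
Qed.
End CosetDiagonal.

Definition prod_Gsets_split (G H : tgroup) : Prop :=
  forall (Z : Type) (actZ : prod_tgroup G H -> Z -> Z), transitive_Gset actZ ->
  exists (X : Type) (actX : G -> X -> X) (Y : Type) (actY : H -> Y -> Y),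
    [/\ transitive_Gset actX, transitive_Gset actY &
        Gset_iso actZ (prod_act actX actY)].

Definition prod_open_subgroups_split (G H : tgroup) : Prop :=
  forall W : set (prod_tgroup G H), open_subgroup W ->
  exists (U : set G) (V : set H),
    [/\ open_subgroup U, open_subgroup V & W = U `*` V].

Definition self_normalizing (G : tgroup) : Prop :=
  forall U : set G, open_subgroup U -> normalizer U = U.

Definition transitive_Gsets_rigid (G : tgroup) : Prop :=
  forall (X : Type) (act : G -> X -> X), transitive_Gset act ->
  forall f : X -> X, bijective f -> equivariant act act f -> forall x, f x = x.

Definition finite_index_open_subgroups_eq (G : tgroup) : Prop :=
  forall U V : set G, open_subgroup U -> open_subgroup V -> V `<=` U ->
  finite_set [set lcoset u V | u in U] -> U = V.

Lemma prod_open_subgroups_split_of_Gsets (G H : tgroup) :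
  is_topgroup G -> is_topgroup H ->
  prod_Gsets_split G H -> prod_open_subgroups_split G H.
Proof.
move=> tG tH splitGH W [hW oW].
have hG := topgroup_group_laws tG; have hH := topgroup_group_laws tH.
have hGH := prod_group_laws hG hH.
have cGH := prod_translations_continuous (topgroup_translations_continuous tG)
  (topgroup_translations_continuous tH).
have := splitGH _ _ (coset_space_transitive hGH hW cGH oW).
move=> [X [actX [Y [actY [[hX _ _] [hY _ _] [f [/bij_inj f_inj f_eq]]]]]]].
set z0 := f (coset_of W (tg_one _)).
exists (stabilizer actX z0.1), (stabilizer actY z0.2); split.
- exact: stabilizer_open_subgroup.
- exact: stabilizer_open_subgroup.
rewrite -stabilizer_prod_act -surjective_pairing.
by rewrite -(equivariant_stabilizer f_inj f_eq) stabilizer_coset1.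
Qed.

Lemma prod_Gsets_split_of_open_subgroups (G H : tgroup) :
  group_laws G -> group_laws H ->
  prod_open_subgroups_split G H -> prod_Gsets_split G H.
Proof.
move=> hG hH splitW Z actZ trZ; have [hZ [z0 _] _] := trZ.
have hGH := prod_group_laws hG hH.
have [U [V [[hU _] [hV _] stabZ]]] :=
  splitW _ (stabilizer_open_subgroup z0 hGH hZ).
exact: (prod_Gset_split hG hH trZ stabZ (subgroup1 hU) (subgroup1 hV)).
Qed.

Lemma self_normalizing_of_prod_open_subgroups_split (G : tgroup) :
  is_topgroup G -> prod_open_subgroups_split G G -> self_normalizing G.
Proof.
move=> tG splitW U [hU oU]; have hG := topgroup_group_laws tG.
have cG := topgroup_translations_continuous tG.
have [A [B [_ _ eW]]] := splitW _
  (conj (coset_diagonal_subgroup hG hU) (open_coset_diagonal hG hU cG oU)).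
exact: coset_diagonal_prod eW.
Qed.

Lemma prod_open_subgroups_split_of_self_normalizing (G H : tgroup) :
  group_laws G -> group_laws H -> self_normalizing G ->
  prod_open_subgroups_split G H.
Proof.
move=> hG hH selfN W [hW oW].
pose U := [set a : G | W (a, tg_one H)].
pose V := [set b : H | W (tg_one G, b)].
have hU : is_subgroup U.
  split=> [|a b Ua Ub|a Ua]; first exact: (subgroup1 hW).
    by have := subgroupM hW Ua Ub; rewrite /= tg_mul1g.
  by have := subgroupV hW Ua; rewrite /= tg_invg1.
have hV : is_subgroup V.
  split=> [|a b Va Vb|a Va]; first exact: (subgroup1 hW).
    by have := subgroupM hW Va Vb; rewrite /= tg_mul1g.
  by have := subgroupV hW Va; rewrite /= tg_invg1.
have oU : open U by move/continuousP: (@pair_continuousl G H (tg_one H)); apply.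
have oV : open V by move/continuousP: (@pair_continuousr G H (tg_one G)); apply.
have conjU p u : W p -> U u -> U (tg_mul (tg_mul p.1 u) (tg_inv p.1)).
  move=> Wp Uu; have := subgroupM hW (subgroupM hW Wp Uu) (subgroupV hW Wp).
  by rewrite /= tg_mulg1 // tg_mulgV.
have UW a b : W (a, b) -> U a.
  move=> Wab; rewrite -(selfN U (conj hU oU)); apply/normalizerP => // x.
  split=> [|/(conjU _ _ Wab)//].
  by move=> /(conjU _ _ (subgroupV hW Wab)) /=; tg_simpl hG.
exists U, V; split=> //.
apply/seteqP; split=> [[a b] Wab|[a b] [Ua Vb]] /=.
  split; first exact: UW Wab.
  have := subgroupM hW (subgroupV hW (UW _ _ Wab)) Wab.
  by rewrite /= tg_mulVg // tg_invg1 // tg_mul1g.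
by have := subgroupM hW Ua Vb; rewrite /= tg_mulg1 // tg_mul1g.
Qed.

Lemma transitive_Gsets_rigid_of_self_normalizing (G : tgroup) :
  group_laws G -> self_normalizing G -> transitive_Gsets_rigid G.
Proof.
move=> hG selfN X act [hX _ reach] f /bij_inj f_inj f_eq x.
have [act1 actM _ _] := hX; have [g gx] := reach x (f x).
have : normalizer (stabilizer act x) g.
  rewrite /normalizer /= -stabilizer_act // gx.
  exact: esym (equivariant_stabilizer f_inj f_eq x).
rewrite selfN; last exact: stabilizer_open_subgroup.
by move=> /= gxx; rewrite -gx gxx.
Qed.

Lemma self_normalizing_of_transitive_Gsets_rigid (G : tgroup) :
  is_topgroup G -> transitive_Gsets_rigid G -> self_normalizing G.
Proof.
move=> tG rigid U [hU oU]; have hG := topgroup_group_laws tG.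
apply/seteqP; split=> [g Ng|]; last exact: sub_normalizer.
have rcosetP h (S : coset_space U) : normalizer U h ->
    exists p, rcoset (sval S) h = lcoset p U.
  case: S => S [p /= ->] Nh; exists (tg_mul p h).
  by rewrite -(lcoset_rcoset hG) (rcoset_normalizer hG Nh) (lcosetM hG).
have Ngi := subgroupV (normalizer_subgroup hG U) Ng.
pose f S : coset_space U := exist _ (rcoset (sval S) g) (rcosetP g S Ng).
pose f' S : coset_space U :=
  exist _ (rcoset (sval S) (tg_inv g)) (rcosetP _ S Ngi).
have f_bij : bijective f.
  by exists f' => S; apply: sval_inj;
    rewrite /= rcosetM // ?tg_mulgV ?tg_mulVg // rcoset1.
have f_eq : equivariant (coset_act hG (W := U)) (coset_act hG (W := U)) f.
  by move=> a S; apply: sval_inj; rewrite /= lcoset_rcoset.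
have trU := coset_space_transitive hG hU (topgroup_translations_continuous tG) oU.
move: (rigid _ _ trU f f_bij f_eq (coset_of U (tg_one G))) => /(congr1 sval) /=.
rewrite lcoset_id //; last exact: subgroup1.
rewrite rcoset_normalizer // => <-.
by exists (tg_one G); [exact: subgroup1|rewrite tg_mulg1].
Qed.

Section Core.
Variables (K : tgroup) (hK : group_laws K) (U V : set K).
Local Notation mul := (@tg_mul K).
Local Notation inv := (@tg_inv K).
Local Notation one := (tg_one K).

Definition gcore : set K := [set x | forall u, U u -> V (mul (mul (inv u) x) u)].

Lemma gcore_subgroup : is_subgroup V -> is_subgroup gcore.
Proof.
move=> hV; split=> [u _|x y Cx Cy u Uu|x Cx u Uu].
- by rewrite tg_mulg1 // tg_mulVg //; exact: subgroup1.
- have -> : mul (mul (inv u) (mul x y)) u =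
      mul (mul (mul (inv u) x) u) (mul (mul (inv u) y) u) by tg_simpl hK.
  exact: subgroupM (Cx _ Uu) (Cy _ Uu).
- have -> : mul (mul (inv u) (inv x)) u = inv (mul (mul (inv u) x) u).
    by tg_simpl hK.
  exact: subgroupV (Cx _ Uu).
Qed.

Lemma gcore_sub : U one -> gcore `<=` V.
Proof. by move=> U1 x /(_ _ U1); rewrite tg_invg1 // tg_mul1g // tg_mulg1. Qed.

Lemma sub_normalizer_gcore : is_subgroup U -> U `<=` normalizer gcore.
Proof.
move=> hU g Ug; apply/normalizerP => // x; split=> Cx u Uu.
  by have := Cx _ (subgroupM hU Ug Uu); tg_simpl hK.
by have := Cx _ (subgroupM hU (subgroupV hU Ug) Uu); tg_simpl hK.
Qed.

Lemma open_gcore : translations_continuous K -> is_subgroup V -> open V ->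
  finite_set [set lcoset u V | u in U] -> open gcore.
Proof.
move=> hconj hV oV finUV.
(* [u^-1 V u] only depends on the coset [u V], so [gcore] is a finite
   intersection of neighbourhoods of [one]. *)
apply: (nbhs1_subgroup_open hK hconj (gcore_subgroup hV)).
pose D c :=
  [set x | forall u, U u -> lcoset u V = c -> V (mul (mul (inv u) x) u)].
have nD c : [set lcoset u V | u in U] c -> nbhs one (D c).
  case=> u0 Uu0 <-.
  apply: filterS _ (nbhs1_conjg hK hconj u0 (open_subgroup_nbhs1 (conj hV oV))).
  move=> x /= Vx u Uu /(lcoset_eqP hK hV) Vuu0.
  have -> : mul (mul (inv u) x) u = mul (mul (mul (inv u) u0)
      (mul (mul (inv u0) x) u0)) (inv (mul (inv u) u0)) by tg_simpl hK.
  exact: subgroup_conj.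
have : nbhs one (\bigcap_(c in [set lcoset u V | u in U]) D c).
  rewrite -(fset_setK finUV); apply: filter_bigI => c.
  by rewrite in_fset_set // inE => /nD.
by apply: filterS => x Dx u Uu; apply: (Dx (lcoset u V)) => //; exists u.
Qed.
End Core.

Lemma finite_index_open_subgroups_eq_of_self_normalizing (G : tgroup) :
  is_topgroup G -> self_normalizing G -> finite_index_open_subgroups_eq G.
Proof.
move=> tG selfN U V [hU oU] [hV oV] VU finUV; have hG := topgroup_group_laws tG.
have oC : open_subgroup (gcore U V).
  split; first exact: gcore_subgroup.
  exact: open_gcore (topgroup_translations_continuous tG) hV oV finUV.
have UC : U `<=` gcore U V by rewrite -(selfN _ oC); exact: sub_normalizer_gcore.
by apply/seteqP; split=> // x /UC; exact: (gcore_sub hG (subgroup1 hU)).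
Qed.

Lemma self_normalizing_of_finite_index_open_subgroups_eq (G : tgroup) :
  pro_oligomorphic G -> finite_index_open_subgroups_eq G -> self_normalizing G.
Proof.
move=> [tG _ _ dcoset_fin] finE U oU; have [hU _] := oU.
have hG := topgroup_group_laws tG; have cG := topgroup_translations_continuous tG.
have UN := sub_normalizer hG hU.
have oN : open_subgroup (normalizer U).
  split; first exact: normalizer_subgroup.
  apply: (nbhs1_subgroup_open hG cG (normalizer_subgroup hG U)).
  exact: filterS UN (open_subgroup_nbhs1 oU).
apply: (finE _ _ oN oU UN); apply: sub_finite_set (dcoset_fin U U oU oU).
by move=> _ [g Ng <-]; exists g => //; exact: dcoset_normalizer.
Qed.

Section OpenSubgroupAsGroup.
Variables (G : tgroup) (hG : group_laws G) (U : set G) (hU : is_subgroup U).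
Local Notation S := (sub_tgroup hU).

Lemma sub_group_laws : group_laws S.
Proof.
split=> [x y z|x|x]; apply: val_inj => /=.
- exact: tg_mulA.
- exact: tg_mul1g.
- exact: tg_mulVg.
Qed.

Lemma sub_self_normalizing : open U -> self_normalizing G -> self_normalizing S.
Proof.
move=> oU selfN T [hT [A oA eA]].
apply/seteqP; split=> [g Ng|]; last exact: (sub_normalizer sub_group_laws hT).
have hT' : is_subgroup (set_val @` T).
  split=> [|? ? [s Ts <-] [t Tt <-]|? [s Ts <-]].
  - by exists (tg_one S) => //; exact: subgroup1.
  - by exists (tg_mul s t) => //; exact: subgroupM.
  - by exists (tg_inv s) => //; exact: subgroupV.
have oT' : open (set_val @` T).
  have -> : set_val @` T = U `&` A.
    apply/seteqP; split=> [_ [s Ts <-]|x [Ux Ax]].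
      by split; [exact: set_valP|rewrite -eA in Ts].
    by exists (exist _ x (mem_set Ux)) => //; rewrite -eA.
  exact: openI.
have : normalizer (set_val @` T) (set_val g).
  by rewrite /normalizer /= image_comp -{2}Ng image_comp.
by rewrite selfN // => -[s Ts /val_inj <-].
Qed.
End OpenSubgroupAsGroup.

Theorem proposition5p5 (G : tgroup) :
  pro_oligomorphic G ->
  [/\ split_group G <->
        (forall H : tgroup, pro_oligomorphic H ->
         forall W : set (prod_tgroup G H), open_subgroup W ->
         exists (U : set G) (V : set H),
           [/\ open_subgroup U, open_subgroup V & W = U `*` V]),
      split_group G <->
        (forall U : set G, open_subgroup U -> normalizer U = U),
      split_group G <->
        (forall (X : Type) (act : G -> X -> X), transitive_Gset act ->
         forall f : X -> X, bijective f -> equivariant act act f ->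
         forall x, f x = x) &
      split_group G <->
        (forall U V : set G, open_subgroup U -> open_subgroup V -> V `<=` U ->
         finite_set [set lcoset u V | u in U] -> U = V)]
  /\ (split_group G ->
      forall (U : set G) (hU : open_subgroup U),
        split_group (sub_tgroup hU.1)).
Proof.
move=> oligG; have [tG _ _ _] := oligG; have hG := topgroup_group_laws tG.
have split_selfN : split_group G -> self_normalizing G.
  move=> splitG; apply: (self_normalizing_of_prod_open_subgroups_split tG).
  exact: (prod_open_subgroups_split_of_Gsets tG tG (splitG G oligG)).
have selfN_split (K : tgroup) :
    group_laws K -> self_normalizing K -> split_group K.
  move=> hK selfN H [tH _ _ _]; have hH := topgroup_group_laws tH.
  apply: (prod_Gsets_split_of_open_subgroups hK hH).
  exact: (prod_open_subgroups_split_of_self_normalizing hK hH selfN).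
split; first split.
- split=> [splitG|splitW] H oligH; have [tH _ _ _] := oligH.
    exact: prod_open_subgroups_split_of_Gsets tG tH (splitG H oligH).
  apply: (prod_Gsets_split_of_open_subgroups hG (topgroup_group_laws tH)).
  exact: splitW.
- by split; [exact: split_selfN|exact: selfN_split].
- split=> [/split_selfN|rigid].
    exact: transitive_Gsets_rigid_of_self_normalizing.
  exact/selfN_split/self_normalizing_of_transitive_Gsets_rigid.
- split=> [/split_selfN|finE].
    exact: finite_index_open_subgroups_eq_of_self_normalizing.
  exact/selfN_split/self_normalizing_of_finite_index_open_subgroups_eq.
move=> /split_selfN selfN U hU.
exact: selfN_split (sub_group_laws hG hU.1) (sub_self_normalizing hG hU.2 selfN).
Qed.
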